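(* Let $\mathcal{H}$ be a real or complex Hilbert space, $\Sigma\subset\mathcal{H}$ a cone, and $f:\mathcal{H}\to\mathbb{R}\cup\{+\infty\}$ a proper, coercive, continuous regularizer. Assume that for some $t>f(0)$ the level set $\mathcal{L}(f,t)=\{y\in\mathcal{H}:f(y)\le t\}$ is convex. Then there exists a family of atoms $\mathcal{A}\subset\Sigma$ such that $$\mathcal{T}_{\mathcal{A}}(\Sigma)\subset\mathbb{R}_+^*\cdot\mathcal{T}_f(\Sigma).$$
   Context: $\Sigma$ is a cone if $tz\in\Sigma$ for all $t\ge0$, $z\in\Sigma$. Coercive: $f(x)\to+\infty$ as $\|x\|_{\mathcal{H}}\to+\infty$. Atomic norm of $\mathcal{A}$: $\|x\|_{\mathcal{A}}=\inf\{s\ge0:x\in s\cdot\overline{\mathrm{conv}}(\mathcal{A})\}$ ($+\infty$ if none). Descent sets: $\mathcal{T}_f(\Sigma)=\bigcup_{x\in\Sigma}\{z:f(x+z)\le f(x)\}$ and $\mathcal{T}_{\mathcal{A}}(\Sigma)=\bigcup_{x\in\Sigma}\{z:\|x+z\|_{\mathcal{A}}\le\|x\|_{\mathcal{A}}\}$. $\mathbb{R}_+^*\cdot T=\{\lambda z:\lambda>0,z\in T\}$. *)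

From HB Require Import structures.
From mathcomp Require Import all_boot all_order all_algebra.
From mathcomp Require Import all_classical all_reals all_analysis.
Set Implicit Arguments. Unset Strict Implicit. Unset Printing Implicit Defensive.
Import Order.TTheory GRing.Theory Num.Theory.
Import numFieldNormedType.Exports.
Local Open Scope classical_set_scope.
Local Open Scope ring_scope.

Definition is_inner_product (R : realType) (V : normedModType R)
  (ip : V -> V -> R) : Prop :=
  [/\ (forall x y, ip x y = ip y x),
      (forall a x y z, ip (a *: x + y) z = a * ip x z + ip y z),
      (forall x, 0 <= ip x x) &
      (forall x, `|x| = Num.sqrt (ip x x))].

Definition is_cone (R : realType) (V : lmodType R) (S : set V) : Prop :=
  forall (t : R) z, 0 <= t -> S z -> S (t *: z).

Definition convex_set_of (R : realType) (V : lmodType R) (C : set V) : Prop :=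
  forall x y (l : R), C x -> C y -> 0 <= l <= 1 -> C (l *: x + (1 - l) *: y).

Definition conv_hull (R : realType) (V : lmodType R) (A : set V) : set V :=
  [set x | exists n (w : 'I_n -> R) (a : 'I_n -> V),
     [/\ (forall i, A (a i)), (forall i, 0 <= w i), \sum_(i < n) w i = 1 &
         x = \sum_(i < n) w i *: a i]].

Definition scale_set (R : realType) (V : lmodType R) (s : R) (S : set V) : set V :=
  [set s *: y | y in S].

(* atomic norm: inf {s >= 0 : x \in s . closure(conv A)}, +oo if empty *)
Definition atomic_norm (R : realType) (V : normedModType R) (A : set V) (x : V)
  : \bar R :=
  ereal_inf [set s%:E | s in [set s : R | 0 <= s /\
                        scale_set s (closure (conv_hull A)) x]].

Definition descent_set (R : realType) (V : lmodType R) (g : V -> \bar R)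
  (S : set V) : set V :=
  \bigcup_(x in S) [set z : V | Order.le (g (x + z)) (g x)].

Definition pos_rescale (R : realType) (V : lmodType R) (T : set V) : set V :=
  [set y | exists l : R, exists2 z, 0 < l /\ T z & y = l *: z].

Definition proper_fun (R : realType) (V : Type) (f : V -> \bar R) : Prop :=
  (forall x, f x != -oo%E) /\ (exists x, f x != +oo%E).

Definition coercive (R : realType) (V : normedModType R) (f : V -> \bar R) : Prop :=
  forall M : R, exists r : R, forall x : V, r < `|x| -> Order.lt (M%:E) (f x).

Definition level_set (R : realType) (V : Type) (f : V -> \bar R) (t : R) : set V :=
  [set y | Order.le (f y) (t%:E)].

(* Take as atoms A := Sigma ∩ {f <= t}. The level set {f <= t} is closed,
   convex and contains 0, hence contains the closed convex hull of A: so
   ‖y‖_A < s forces f(y/s) <= t, while for x in Sigma, f(x/s) <= t forces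
   ‖x‖_A <= s. Continuity at 0 makes ‖·‖_A finite on Sigma, and coercivity
   makes it dominate a multiple of the norm, so it vanishes only at 0. For a
   descent direction z != 0 of ‖·‖_A at x in Sigma, a := ‖x‖_A is positive
   and, letting s tend to a, f((x+z)/a) <= t <= f(x/a): z/a is a descent
   direction of f at x/a in Sigma. *)

From HB Require Import structures.
From mathcomp Require Import all_boot all_order all_algebra.
From mathcomp Require Import all_classical all_reals all_analysis.
Import Order.TTheory GRing.Theory Num.Theory.
Import numFieldNormedType.Exports.
Local Open Scope classical_set_scope.
Local Open Scope ring_scope.

Section convex_hull.
Context {R : realType} {V : lmodType R}.

Lemma convex_set_sum (C : set V) : convex_set_of C ->
  forall n (w : 'I_n -> R) (a : 'I_n -> V),
  (forall i, C (a i)) -> (forall i, 0 <= w i) -> \sum_(i < n) w i = 1 ->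
  C (\sum_(i < n) w i *: a i).
Proof.
move=> convC; elim=> [|n IHn] w a Ca w_ge0.
  by rewrite big_ord0 => /eqP; rewrite eq_sym oner_eq0.
rewrite !big_ord_recr /=; set c := w ord_max => w1.
set w' := fun i : 'I_n => w (widen_ord (leqnSn n) i).
have restE : \sum_(i < n) w' i = 1 - c by rewrite -w1 addrK.
have c_le1 : c <= 1.
  by rewrite -subr_ge0 -restE; apply: sumr_ge0 => i _; exact: w_ge0.
have [c1|c_neq1] := eqVneq c 1.
  have w'0 k : w (widen_ord (leqnSn n) k) = 0.
    apply: (@psumr_eq0P _ _ predT w') => // [j _|]; first exact: w_ge0.
    by rewrite restE c1 subrr.
  by rewrite big1 ?add0r ?c1 ?scale1r // => i _; rewrite w'0 scale0r.
have c_lt1 : 0 < 1 - c by rewrite subr_gt0 lt_neqAle c_neq1.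
have := IHn (fun i => w' i / (1 - c)) (fun i => a (widen_ord (leqnSn n) i)).
move=> /(_ (fun i => Ca _) (fun i => divr_ge0 (w_ge0 _) (ltW c_lt1))).
rewrite -mulr_suml restE divff ?gt_eqF // => /(_ erefl) Crest.
have := convC _ _ c (Ca ord_max) Crest; rewrite c_le1 w_ge0 => /(_ isT).
rewrite addrC scaler_sumr; congr (C (_ + _)); apply: eq_bigr => i _.
by rewrite scalerA mulrCA divff ?mulr1 ?gt_eqF.
Qed.

Lemma conv_hull_sub (A C : set V) :
  convex_set_of C -> A `<=` C -> conv_hull A `<=` C.
Proof.
move=> convC AC _ [n [w [a [Aa w_ge0 w1 ->]]]].
by apply: convex_set_sum => // i; exact/AC/Aa.
Qed.

Lemma sub_conv_hull (A : set V) : A `<=` conv_hull A.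
Proof.
move=> y Ay; exists 1%N, (fun=> 1), (fun=> y).
by split; rewrite ?big_ord1 ?scale1r.
Qed.

Lemma convex_scale_le1 (C : set V) : convex_set_of C -> C 0 ->
  forall y (l : R), C y -> 0 <= l <= 1 -> C (l *: y).
Proof.
move=> convC C0 y l Cy l01.
by have := convC _ _ _ Cy C0 l01; rewrite scaler0 addr0.
Qed.

End convex_hull.

Section atomic_norm.
Context {R : realType} {V : normedModType R} (A : set V).
Local Notation K := (closure (conv_hull A)).
Local Notation N := (atomic_norm A).

Lemma atomic_norm_ge0 x : (0 <= N x)%E.
Proof. by apply: le_ereal_inf_tmp => _ [s [s_ge0 _] <-]; rewrite lee_fin. Qed.

Lemma atomic_norm_le x s : 0 <= s -> scale_set s K x -> (N x <= s%:E)%E.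
Proof. by move=> s_ge0 Kx; apply: ereal_inf_lbound; exists s. Qed.

Lemma atomic_norm_ltP x b : (N x < b%:E)%E ->
  exists s, [/\ 0 <= s, s < b & scale_set s K x].
Proof.
by move=> /ereal_inf_lt[_ [s [s_ge0 Kx] <-]]; rewrite lte_fin; exists s.
Qed.

Lemma atomic_norm_atom x s : 0 < s -> A (s^-1 *: x) -> (N x <= s%:E)%E.
Proof.
move=> s_gt0 Ax; apply: atomic_norm_le; first exact: ltW.
exists (s^-1 *: x); first exact/subset_closure/sub_conv_hull.
by rewrite scalerA divff ?gt_eqF ?scale1r.
Qed.

Lemma atomic_norm_ge_norm (r : R) : 0 < r -> (forall k, K k -> `|k| <= r) ->
  forall x, ((`|x| / r)%:E <= N x)%E.
Proof.
move=> r_gt0 Kr x; apply: le_ereal_inf_tmp => _ [s [s_ge0 [k Kk <-]] <-].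
by rewrite lee_fin ler_pdivrMr // normrZ ger0_norm // ler_wpM2l ?Kr.
Qed.

Lemma atomic_norm_le0 (r : R) : 0 < r -> (forall k, K k -> `|k| <= r) ->
  forall x, (N x <= 0%:E)%E -> x = 0.
Proof.
move=> r_gt0 Kr x Nx0; apply/eqP; rewrite -normr_le0 -(mul0r r) -ler_pdivrMr //.
by rewrite -lee_fin (le_trans (atomic_norm_ge_norm _ r_gt0 Kr x) Nx0).
Qed.

End atomic_norm.

Section level_set.
Context {R : realType} {V : normedModType R} {f : V -> \bar R}.
Hypothesis fcont : continuous f.

Lemma closed_level_set t : closed (level_set f t).
Proof.
apply: (@preimage_closed _ _ f [set e | (e <= t%:E)%E]) => [x _|].
  exact: fcont.
exact: closed_ereal_ge_ereal.
Qed.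

Lemma cvg_comp_scale (g : R -> R) y a : g s @[s --> a] --> g a ->
  f (g s *: y) @[s --> a] --> f (g a *: y).
Proof.
by move=> ga; apply: (continuous_cvg _ (fcont (g a *: y))); exact: cvgZr_tmp.
Qed.

Lemma cvg_comp_scaleV y a : a != 0 ->
  f (s^-1 *: y) @[s --> a] --> f (a^-1 *: y).
Proof. by move=> a_neq0; apply: cvg_comp_scale; exact: cvgV. Qed.

Lemma level_set_bounded t : coercive f ->
  exists2 r, 0 < r & forall y, level_set f t y -> `|y| <= r.
Proof.
move=> /(_ t)[r0 Hr0]; exists (`|r0| + 1) => [|y]; first by rewrite ltr_wpDl.
rewrite /level_set /= leNgt => /negP ft; rewrite leNgt; apply/negP => y_gt.
apply/ft/Hr0; apply: le_lt_trans y_gt.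
by rewrite (le_trans (ler_norm _)) ?lerDl.
Qed.

End level_set.

Section regularizer.
Context {R : realType} {V : normedModType R} {Sigma : set V} {f : V -> \bar R}
  {t : R}.
Hypotheses (Sigma_cone : is_cone Sigma) (fcont : continuous f)
  (fcoer : coercive f) (f0_lt : (f 0%R < t%:E)%E)
  (L_convex : convex_set_of (level_set f t)).
Local Notation L := (level_set f t).
Local Notation A := (Sigma `&` L).
Local Notation N := (atomic_norm A).

Lemma level_set0 : L 0.
Proof. exact: ltW. Qed.

Lemma closure_conv_hull_sub_level : closure (conv_hull A) `<=` L.
Proof.
rewrite [X in _ `<=` X](closure_id _).1; last exact: closed_level_set.
by apply/closureS/(conv_hull_sub _ _ L_convex) => y [].
Qed.

Lemma atomic_norm_le0_eq0 x : (N x <= 0%:E)%E -> x = 0.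
Proof.
have [r r_gt0 Lr] := level_set_bounded t fcoer.
by apply: (atomic_norm_le0 _ _ r_gt0) => k /closure_conv_hull_sub_level /Lr.
Qed.

Lemma atomic_norm_fin x : Sigma x -> exists a, N x = a%:E.
Proof.
move=> Sx; have [e [e_gt0 fe]] : exists e, 0 < e /\ (f (e *: x) < t%:E)%E.
  have fx : f (e *: x) @[e --> 0^'+] --> f 0.
    rewrite -(scale0r x); apply: cvg_at_right_filter.
    exact: (cvg_comp_scale fcont id).
  apply: (@filter_ex _ (0^'+)); near=> e; split.
    by near: e; exact: nbhs_right_gt.
  near: e; apply: (fx [set u | (u < t%:E)%E]); apply: open_nbhs_nbhs.
  by split => //; exact: open_ereal_lt_ereal.
have Nx_le : (N x <= (e^-1)%:E)%E.
  apply: atomic_norm_atom; rewrite ?invr_gt0 ?invrK //; split; last exact: ltW.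
  by apply: Sigma_cone => //; exact: ltW.
move: Nx_le (atomic_norm_ge0 A x); case: (N x) => [a _ _| |] //; by exists a.
Unshelve. all: end_near.
Qed.

Lemma level_of_atomic_norm_lt y s : 0 < s -> (N y < s%:E)%E -> L (s^-1 *: y).
Proof.
move=> s_gt0 /atomic_norm_ltP[s' [s'_ge0 s's [k Kk <-]]].
rewrite scalerA; apply: (convex_scale_le1 _ L_convex level_set0).
  exact: closure_conv_hull_sub_level.
rewrite mulr_ge0 ?invr_ge0 ?(ltW s_gt0) //= mulrC ler_pdivrMr // mul1r.
exact: ltW.
Qed.

Lemma level_of_atomic_norm_le y a : 0 < a -> (N y <= a%:E)%E -> L (a^-1 *: y).
Proof.
move=> a_gt0 Nya.
have fy : f (s^-1 *: y) @[s --> a^'+] --> f (a^-1 *: y).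
  by apply/cvg_at_right_filter/(cvg_comp_scaleV fcont); rewrite gt_eqF.
apply: (closed_cvg _ (@closed_ereal_ge_ereal _ t%:E) _ _ fy).
near=> s; have a_lt_s : a < s by near: s; exact: nbhs_right_gt.
apply: level_of_atomic_norm_lt; first exact: lt_trans a_lt_s.
by apply: le_lt_trans Nya _; rewrite lte_fin.
Unshelve. all: end_near.
Qed.

Lemma level_scale_atomic_norm_ge x a : Sigma x -> 0 < a -> N x = a%:E ->
  (t%:E <= f (a^-1 *: x))%E.
Proof.
move=> Sx a_gt0 Nxa.
have fx : f (s^-1 *: x) @[s --> a^'-] --> f (a^-1 *: x).
  by apply/cvg_at_left_filter/(cvg_comp_scaleV fcont); rewrite gt_eqF.
apply: (closed_cvg _ (@closed_ereal_le_ereal _ t%:E) _ _ fx).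
near=> s; have s_gt0 : 0 < s by near: s; exact: nbhs_left_gt.
have s_lt_a : s < a by near: s; exact: nbhs_left_lt.
rewrite /= leNgt; apply/negP => /ltW fs_le.
have : (N x <= s%:E)%E.
  apply: atomic_norm_atom s_gt0 _; split => //.
  by apply: Sigma_cone => //; rewrite invr_ge0 ltW.
by rewrite Nxa lee_fin leNgt s_lt_a.
Unshelve. all: end_near.
Qed.

Lemma descent_atomic_norm_sub :
  descent_set N Sigma `<=` pos_rescale (descent_set f Sigma).
Proof.
move=> z [x Sx /= Nxz_le].
have [->|z_neq0] := eqVneq z 0.
  exists 1, 0; last by rewrite scaler0.
  by split => //; exists x => //=; rewrite addr0.
have [a Nxa] := atomic_norm_fin _ Sx; rewrite Nxa in Nxz_le.
have a_gt0 : 0 < a.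
  rewrite lt_neqAle -lee_fin -Nxa atomic_norm_ge0 andbT.
  apply: contra z_neq0 => /eqP a0; rewrite -a0 in Nxa Nxz_le.
  have x0 : x = 0 by apply: atomic_norm_le0_eq0; rewrite Nxa.
  by have := atomic_norm_le0_eq0 _ Nxz_le; rewrite x0 add0r => ->.
exists a, (a^-1 *: z); last by rewrite scalerA divff ?gt_eqF ?scale1r.
split => //; exists (a^-1 *: x).
  by apply: Sigma_cone; rewrite ?invr_ge0 ?ltW.
rewrite /= -scalerDr.
exact: le_trans (level_of_atomic_norm_le _ _ a_gt0 Nxz_le)
  (level_scale_atomic_norm_ge _ _ Sx a_gt0 Nxa).
Qed.

End regularizer.

Theorem lemma1 (R : realType) (V : completeNormedModType R) (ip : V -> V -> R)
  (Hip : is_inner_product ip) (Sigma : set V) (HSigma : is_cone Sigma)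
  (f : V -> \bar R) (fproper : proper_fun f) (fcoer : coercive f)
  (fcont : continuous f) (t : R) (ht : Order.lt (f 0) (t%:E))
  (hconv : convex_set_of (level_set f t)) :
  exists A : set V, A `<=` Sigma /\
    descent_set (atomic_norm A) Sigma `<=` pos_rescale (descent_set f Sigma).
Proof.
exists (Sigma `&` level_set f t); split; first by move=> y [].
exact: descent_atomic_norm_sub HSigma fcont fcoer ht hconv.
Qed.
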